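(* Let $\lambda\in\Lambda$ and $z\in\mathbb C_p$. (i) If $\rho<|z|<1$, then $|Q_\lambda(z)|=p|z|^p>|z|$. (ii) If $|z|\le\rho$, then $|Q_\lambda(z)|\le\rho$. (iii) If $|z-1|<1$, then $|Q_\lambda(z)-1|=p|z-1|$. (iv) If $1<|z|<\hat r$, then $|Q_\lambda(z)|=p|z|^{p+1}$.
   Context: Let $p$ be a prime, $\mathbb C_p$ with $p$-adic absolute value, $|p|=1/p$. $\Lambda=\{\lambda\in\mathbb C_p:|\lambda-1|<1\}$, $P_\lambda(z)=\frac{\lambda}{p}z^p+\left(1-\frac{\lambda}{p}\right)z^{p+1}$, $\rho=p^{-1/(p-1)}$. Fix $\hat r\in|\mathbb C_p^*|$, $\hat r>1$, $B=\{z:|z|\le\hat r\}$; $\mathcal H(B)$ is the ring of power series $\sum a_iz^i$ convergent on $B$ with norm $\|f\|_B=\sup_i|a_i|\hat r^{\,i}$. Fix $Q\in\mathcal H(B)$ with $\|Q\|_B<\rho$, $Q^*_\lambda=P_\lambda+Q$, and let $h(\lambda)$ be the unique fixed point of $Q^*_\lambda$ in $\{z:|z-1|\le|Q(1)|/p\}$. Define $Q_\lambda(z)=P_\lambda(z+h(\lambda)-1)+Q(z+h(\lambda)-1)+1-h(\lambda)$ for $z\in B$ (the conjugate of $Q^*_\lambda$ by $A_\lambda(z)=z+h(\lambda)-1$). *)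

From mathcomp Require Import all_boot all_order all_algebra.
From mathcomp Require Import reals exp.
Set Implicit Arguments. Unset Strict Implicit. Unset Printing Implicit Defensive.
Import Order.TTheory GRing.Theory Num.Theory.
Local Open Scope ring_scope.

Definition abs_cvg (R : realType) (K : fieldType) (abs : K -> R)
  (u : nat -> K) (l : K) : Prop :=
  forall e : R, 0 < e -> exists N : nat, forall n, (N <= n)%N -> abs (u n - l) < e.

Definition abs_cauchy (R : realType) (K : fieldType) (abs : K -> R)
  (u : nat -> K) : Prop :=
  forall e : R, 0 < e -> exists N : nat, forall m n, (N <= m)%N -> (N <= n)%N ->
    abs (u m - u n) < e.

(* abs is a complete non-archimedean absolute value on K with |p| = 1/p.
   Together with K algebraically closed, this is the structure of C_p. *)
Definition is_Cp_abs (R : realType) (p : nat) (K : closedFieldType)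
  (abs : K -> R) : Prop :=
  (forall x, 0 <= abs x) /\
  (forall x, abs x = 0 <-> x = 0) /\
  (forall x y, abs (x * y) = abs x * abs y) /\
  (forall x y, abs (x + y) <= Num.max (abs x) (abs y)) /\
  abs (p%:R) = (p%:R)^-1 /\
  (forall u, abs_cauchy abs u -> exists l, abs_cvg abs u l).

Definition rho (R : realType) (p : nat) : R :=
  powR ((p%:R)^-1) ((p.-1)%:R)^-1.

Definition Plam (K : fieldType) (p : nat) (lam z : K) : K :=
  lam / p%:R * z ^+ p + (1 - lam / p%:R) * z ^+ p.+1.

Definition Qstar (K : fieldType) (p : nat) (Qf : K -> K) (lam z : K) : K :=
  Plam p lam z + Qf z.

Definition Qlam (K : fieldType) (p : nat) (Qf : K -> K) (h : K -> K)
  (lam z : K) : K :=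
  Plam p lam (z + h lam - 1) + Qf (z + h lam - 1) + 1 - h lam.

From mathcomp Require Import all_boot all_order all_algebra.
From mathcomp Require Import reals exp.
From mathcomp Require Import ring lra.
Set Implicit Arguments. Unset Strict Implicit. Unset Printing Implicit Defensive.
Import Order.TTheory GRing.Theory Num.Theory.
Local Open Scope ring_scope.

(* With w = z + h(lambda) - 1 one has Q_lambda(z) = P_lambda(w) + (Q(w) + 1 - h(lambda)),
   and the second summand has absolute value < rho because ||Q||_B < rho and
   |h(lambda) - 1| <= |Q(1)|/p.  As |lambda/p| = |1 - lambda/p| = p, the factorisation
   P_lambda(w) = w^p (lambda/p + w (1 - lambda/p)) gives |P_lambda(w)| = p|w|^p on the
   open unit disc and p|w|^(p+1) outside the closed one; this dominates the perturbation
   in (i), (ii) and (iv).  For (iii), the fixed-point equation turns Q_lambda(z) - 1 into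
   (P_lambda(w) - P_lambda(h)) + (Q(w) - Q(h)) with w - h = z - 1: near 1 the first
   difference has size exactly p|z - 1|, while the coefficient bound makes Q
   ||Q||_B-Lipschitz there, and ||Q||_B < rho < 1 < p. *)

Definition ultrametric_abs (R : realFieldType) (K : fieldType) (abs : K -> R) :=
  [/\ forall x, 0 <= abs x, forall x, abs x = 0 <-> x = 0,
      {morph abs : x y / x * y}
    & forall x y, abs (x + y) <= Num.max (abs x) (abs y)].

Lemma Cp_abs_ultrametric (R : realType) (p : nat) (K : closedFieldType)
  (abs : K -> R) : is_Cp_abs p abs -> ultrametric_abs abs.
Proof. by case=> ? [? [? [? _]]]; split. Qed.

Section Ultrametric.
Variables (R : realFieldType) (K : fieldType) (abs : K -> R).
Hypothesis habs : ultrametric_abs abs.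

Lemma abs_ge0 x : 0 <= abs x. Proof. by case: habs. Qed.
Lemma abs_eq0 x : abs x = 0 <-> x = 0. Proof. by case: habs. Qed.
Lemma absM : {morph abs : x y / x * y}. Proof. by case: habs. Qed.
Lemma abs_le_max x y : abs (x + y) <= Num.max (abs x) (abs y).
Proof. by case: habs. Qed.

Lemma abs0 : abs 0 = 0. Proof. exact/abs_eq0. Qed.

Lemma abs_gt0 x : x != 0 -> 0 < abs x.
Proof. by rewrite lt_def abs_ge0 andbT; apply: contra_neq => /abs_eq0. Qed.

Lemma abs1 : abs 1 = 1.
Proof.
apply: (mulfI (lt0r_neq0 (abs_gt0 (oner_neq0 K)))).
by rewrite -absM !mulr1.
Qed.

Lemma absV x : abs x^-1 = (abs x)^-1.
Proof.
have [->|x0] := eqVneq x 0; first by rewrite invr0 abs0 invr0.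
apply: (mulIf (lt0r_neq0 (abs_gt0 x0))).
by rewrite -absM !mulVf ?abs1 // lt0r_neq0 // abs_gt0.
Qed.

Lemma absN x : abs (- x) = abs x.
Proof.
have /eqP : abs (-1) ^+ 2 = 1 by rewrite expr2 -absM mulrNN mulr1 abs1.
rewrite sqrf_eq1 => /orP[/eqP absN1|/eqP absN1].
  by rewrite -mulN1r absM absN1 mul1r.
by have := abs_ge0 (-1); rewrite absN1; lra.
Qed.

Lemma absB x y : abs (x - y) = abs (y - x).
Proof. by rewrite -opprB absN. Qed.

Lemma absX x n : abs (x ^+ n) = abs x ^+ n.
Proof. by elim: n => [|n IHn]; rewrite ?abs1 // !exprS absM IHn. Qed.

Lemma abs_add_le x y b : abs x <= b -> abs y <= b -> abs (x + y) <= b.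
Proof. by move=> xb yb; apply: le_trans (abs_le_max x y) _; rewrite ge_max xb. Qed.

Lemma abs_add_lt x y b : abs x < b -> abs y < b -> abs (x + y) < b.
Proof. by move=> xb yb; apply: le_lt_trans (abs_le_max x y) _; rewrite gt_max xb. Qed.

Lemma abs_add_dominant x y : abs x < abs y -> abs (x + y) = abs y.
Proof.
move=> xy; apply/eqP; rewrite eq_le abs_add_le ?(ltW xy) //=.
have := abs_le_max (x + y) (- x); rewrite addrC addKr absN le_max.
by case/orP=> // yx; move: (lt_le_trans xy yx); rewrite ltxx.
Qed.

Lemma abs_near1 x : abs (x - 1) < 1 -> abs x = 1.
Proof.
move=> x1; have -> : x = (x - 1) + 1 by rewrite subrK.
by rewrite abs_add_dominant abs1.
Qed.

Lemma abs_expB_le x y n :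
  abs x <= 1 -> abs y <= 1 -> abs (x ^+ n - y ^+ n) <= abs (x - y).
Proof.
move=> x1 y1; elim: n => [|n IHn]; first by rewrite subrr abs0 abs_ge0.
have -> : x ^+ n.+1 - y ^+ n.+1 = x * (x ^+ n - y ^+ n) + (x - y) * y ^+ n.
  by rewrite !exprS; ring.
apply: abs_add_le; rewrite absM.
  by apply: le_trans IHn; rewrite ler_piMl ?abs_ge0.
by rewrite absX ler_piMr ?abs_ge0 ?exprn_ile1 ?abs_ge0.
Qed.

End Ultrametric.

Section Series.
Variables (R : realType) (K : fieldType) (abs : K -> R).
Hypothesis habs : ultrametric_abs abs.

Lemma abs_cvgB u v l m : abs_cvg abs u l -> abs_cvg abs v m ->
  abs_cvg abs (fun n => u n - v n) (l - m).
Proof.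
move=> ul vm e e0; have [[N1 uN1] [N2 vN2]] := (ul e e0, vm e e0).
exists (maxn N1 N2) => n; rewrite geq_max => /andP[n1 n2].
have -> : u n - v n - (l - m) = (u n - l) - (v n - m) by ring.
by rewrite abs_add_lt ?absN ?uN1 ?vN2.
Qed.

Lemma abs_lim_le u l b :
  abs_cvg abs u l -> (forall n, abs (u n) <= b) -> abs l <= b.
Proof.
move=> ul ub; rewrite leNgt; apply/negP => bl.
have b0 : 0 <= b by apply: le_trans (ub 0%N); apply: abs_ge0.
have [N uN] := ul (abs l) (le_lt_trans b0 bl).
have := abs_le_max habs (u N) (l - u N); rewrite addrC subrK absB //.
by rewrite le_max => /orP[]; [move: (ub N) | move: (uN N (leqnn N))]; lra.
Qed.

Variables (a : nat -> K) (c : R).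

Lemma series_abs_le r z q : (forall i, abs (a i) * r ^+ i <= c) -> abs z <= r ->
  abs_cvg abs (fun n => \sum_(i < n) a i * z ^+ i) q -> abs q <= c.
Proof.
move=> ac zr zq; have z0 := abs_ge0 habs z.
have c0 : 0 <= c by apply: le_trans (ac 0%N); rewrite mulr1 abs_ge0.
apply: abs_lim_le zq _ => n /=.
apply: (big_ind (fun x => abs x <= c)) => [||i _].
- by rewrite abs0.
- by move=> x y; apply: abs_add_le.
rewrite absM // absX //; apply: le_trans (ac i).
by rewrite ler_wpM2l ?abs_ge0 ?lerXn2r ?nnegrE //; apply: le_trans zr.
Qed.

Lemma series_absB_le r w v qw qv : (forall i, abs (a i) * r ^+ i <= c) -> 1 <= r ->
  abs w <= 1 -> abs v <= 1 ->
  abs_cvg abs (fun n => \sum_(i < n) a i * w ^+ i) qw ->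
  abs_cvg abs (fun n => \sum_(i < n) a i * v ^+ i) qv ->
  abs (qw - qv) <= c * abs (w - v).
Proof.
move=> arc r1 w1 v1 wq vq; have ac i : abs (a i) <= c.
  by apply: le_trans (arc i); rewrite ler_peMr ?abs_ge0 ?exprn_ege1.
have c0 : 0 <= c by apply: le_trans (ac 0%N); apply: abs_ge0.
apply: abs_lim_le (abs_cvgB wq vq) _ => n; rewrite -sumrB.
apply: (big_ind (fun x => abs x <= c * abs (w - v))) => [||i _].
- by rewrite abs0 // mulr_ge0 ?abs_ge0.
- by move=> x y; apply: abs_add_le.
by rewrite -mulrBr absM // ler_pM ?abs_ge0 ?abs_expB_le.
Qed.

End Series.

Section Rho.
Variables (R : realType) (p : nat).
Hypothesis p_gt1 : (1 < p)%N.
Local Notation rho := (rho R p).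

Let p_gt0 : (0 < p%:R :> R). Proof. by rewrite ltr0n ltnW. Qed.

Let exprS_pred (x : R) : x ^+ p = x * x ^+ p.-1.
Proof. by rewrite -exprS prednK // ltnW. Qed.

Lemma rho_gt0 : 0 < rho.
Proof. by rewrite powR_gt0 // invr_gt0. Qed.

Lemma rho_expn_pred : rho ^+ p.-1 = p%:R^-1.
Proof.
rewrite /rho -powR_mulrn ?powR_ge0 // -powRrM mulVf ?powRr1 ?invr_ge0 ?ltW //.
by rewrite pnatr_eq0 -lt0n -subn1 subn_gt0.
Qed.

Lemma mulr_rho_expn : p%:R * rho ^+ p = rho.
Proof.
by rewrite exprS_pred rho_expn_pred mulrCA mulfV ?mulr1 ?gt_eqF.
Qed.

Lemma rho_lt1 : rho < 1.
Proof.
rewrite ltNge; apply/negP => /(exprn_ege1 p.-1); rewrite rho_expn_pred invf_ge1 //.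
by rewrite lern1 leqNgt p_gt1.
Qed.

Lemma rho_lt_mulr_expn x : rho < x -> x < p%:R * x ^+ p.
Proof.
move=> rx; have x0 : 0 < x := lt_trans rho_gt0 rx.
have xp : p%:R^-1 < x ^+ p.-1.
  by rewrite -rho_expn_pred ltrXn2r ?ltW ?rho_gt0 // -lt0n -subn1 subn_gt0.
rewrite exprS_pred mulrCA -{1}(mulr1 x) ltr_pM2l //.
by rewrite -(ltr_pM2l p_gt0) mulfV ?gt_eqF in xp.
Qed.

End Rho.

Lemma Plam_factor (K : fieldType) (p : nat) (lam x : K) :
  Plam p lam x = x ^+ p * (lam / p%:R + x * (1 - lam / p%:R)).
Proof. by rewrite /Plam exprSr; ring. Qed.

Lemma PlamB (K : fieldType) (p : nat) (lam x y : K) :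
  Plam p lam x - Plam p lam y = (x ^+ p.+1 - y ^+ p.+1)
    - lam / p%:R * ((x - y) * x ^+ p + (y - 1) * (x ^+ p - y ^+ p)).
Proof. by rewrite /Plam !exprSr; ring. Qed.

Section AbsPlam.
Variables (R : realFieldType) (K : fieldType) (abs : K -> R) (p : nat) (lam : K).
Hypotheses (habs : ultrametric_abs abs) (p_gt1 : (1 < p)%N).
Hypotheses (abs_p : abs p%:R = p%:R^-1) (lam_near1 : abs (lam - 1) < 1).

Let p_gt1R : 1 < p%:R :> R. Proof. by rewrite ltr1n. Qed.

Lemma abs_lam_divp : abs (lam / p%:R) = p%:R.
Proof. by rewrite (absM habs) (absV habs) abs_p invrK (abs_near1 habs) ?mul1r. Qed.

Lemma abs_1_sub_lam_divp : abs (1 - lam / p%:R) = p%:R.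
Proof. by rewrite (abs_add_dominant habs) (absN habs) ?abs1 ?abs_lam_divp. Qed.

Lemma abs_Plam_lt1 x : abs x < 1 -> abs (Plam p lam x) = p%:R * abs x ^+ p.
Proof.
move=> x1; rewrite Plam_factor (absM habs) (absX habs) addrC (abs_add_dominant habs).
  by rewrite abs_lam_divp mulrC.
by rewrite (absM habs) abs_1_sub_lam_divp abs_lam_divp gtr_pMl // (lt_trans ltr01).
Qed.

Lemma abs_Plam_gt1 x : 1 < abs x -> abs (Plam p lam x) = p%:R * abs x ^+ p.+1.
Proof.
move=> x1; have p_gt0 : 0 < p%:R :> R := lt_trans ltr01 p_gt1R.
rewrite Plam_factor (absM habs) (absX habs) (abs_add_dominant habs).
  by rewrite (absM habs x) abs_1_sub_lam_divp exprSr mulrA mulrC.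
by rewrite (absM habs x) abs_1_sub_lam_divp abs_lam_divp ltr_pMl.
Qed.

Lemma abs_PlamB x y : abs (x - 1) < 1 -> abs (y - 1) < 1 ->
  abs (Plam p lam x - Plam p lam y) = p%:R * abs (x - y).
Proof.
move=> x1 y1; have [->|xy] := eqVneq x y; first by rewrite !subrr abs0 ?mulr0.
have xy0 : 0 < abs (x - y) by rewrite (abs_gt0 habs) ?subr_eq0.
have [absx absy] := (abs_near1 habs x1, abs_near1 habs y1).
have expB : abs (x ^+ p - y ^+ p) <= abs (x - y).
  by rewrite (abs_expB_le habs) ?absx ?absy.
have small : abs ((y - 1) * (x ^+ p - y ^+ p)) < abs ((x - y) * x ^+ p).
  rewrite !(absM habs (_ - _)) (absX habs) absx expr1n mulr1.
  by apply: le_lt_trans (ler_wpM2l (abs_ge0 habs _) expB) _; rewrite gtr_pMl.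
have inner : abs ((x - y) * x ^+ p + (y - 1) * (x ^+ p - y ^+ p)) = abs (x - y).
  rewrite addrC (abs_add_dominant habs small) (absM habs (_ - _)) (absX habs).
  by rewrite absx expr1n mulr1.
have outer : abs (x ^+ p.+1 - y ^+ p.+1)
    < abs (- (lam / p%:R * ((x - y) * x ^+ p + (y - 1) * (x ^+ p - y ^+ p)))).
  rewrite (absN habs) (absM habs) abs_lam_divp inner.
  by apply: le_lt_trans (abs_expB_le habs _ _ _) _; rewrite ?absx ?absy ?ltr_pMl.
by rewrite PlamB (abs_add_dominant habs outer) (absN habs) (absM habs) abs_lam_divp inner.
Qed.

End AbsPlam.

Section Qlam.
Variables (R : realType) (K : fieldType) (abs : K -> R) (p : nat) (rhat c : R).
Variables (Qf h : K -> K) (lam : K).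
Hypotheses (habs : ultrametric_abs abs) (p_gt1 : (1 < p)%N).
Hypotheses (abs_p : abs p%:R = p%:R^-1) (lam_near1 : abs (lam - 1) < 1).
Hypotheses (rhat_gt1 : 1 < rhat) (c_lt_rho : c < rho R p).
Hypothesis Q_le : forall w, abs w <= rhat -> abs (Qf w) <= c.
Hypothesis Q_lipschitz : forall w v, abs (w - 1) < 1 -> abs (v - 1) < 1 ->
  abs (Qf w - Qf v) <= c * abs (w - v).
Hypotheses (h_near1 : abs (h lam - 1) < rho R p)
  (h_fixed : Qstar p Qf lam (h lam) = h lam).

Local Notation rho := (rho R p).
Local Notation shift z := (z + h lam - 1).

Let rho_lt1_p : rho < 1 := rho_lt1 R p_gt1.
Let p_gt1R : 1 < p%:R :> R. Proof. by rewrite ltr1n. Qed.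

Lemma QlamE z :
  Qlam p Qf h lam z = Plam p lam (shift z) + (Qf (shift z) + (1 - h lam)).
Proof. by rewrite /Qlam !addrA. Qed.

Lemma abs_Qlam_perturbation_lt z :
  abs (shift z) <= rhat -> abs (Qf (shift z) + (1 - h lam)) < rho.
Proof.
move=> zr; apply: (abs_add_lt habs); last by rewrite (absB habs).
exact: le_lt_trans (Q_le zr) c_lt_rho.
Qed.

Lemma abs_shift z : rho < abs z -> abs (shift z) = abs z.
Proof.
by move=> rz; rewrite -addrA addrC (abs_add_dominant habs) // (lt_trans h_near1).
Qed.

Lemma abs_Qlam_dominant z : abs (shift z) <= rhat ->
  rho <= abs (Plam p lam (shift z)) ->
  abs (Qlam p Qf h lam z) = abs (Plam p lam (shift z)).
Proof.
move=> zr rP; rewrite QlamE addrC (abs_add_dominant habs) //.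
exact: lt_le_trans (abs_Qlam_perturbation_lt zr) rP.
Qed.

Lemma abs_Qlam_expanding z : rho < abs z -> abs z < 1 ->
  abs (Qlam p Qf h lam z) = p%:R * abs z ^+ p /\ abs z < abs (Qlam p Qf h lam z).
Proof.
move=> rz z1; have zw := abs_shift rz.
have PE : abs (Plam p lam (shift z)) = p%:R * abs z ^+ p.
  by rewrite (abs_Plam_lt1 habs) ?zw.
have zP := rho_lt_mulr_expn p_gt1 rz.
rewrite abs_Qlam_dominant.
- by rewrite PE.
- by rewrite zw ltW // (lt_trans z1).
- by rewrite PE ltW // (lt_trans rz).
Qed.

Lemma abs_Qlam_disc z : abs z <= rho -> abs (Qlam p Qf h lam z) <= rho.
Proof.
move=> zr; have rho_ge0 := ltW (rho_gt0 R p_gt1).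
have wr : abs (shift z) <= rho.
  by rewrite -addrA addrC; apply: (abs_add_le habs) => //; apply: ltW.
have wrhat : abs (shift z) <= rhat.
  by rewrite (le_trans wr) // ltW // (lt_trans rho_lt1_p).
rewrite QlamE; apply: (abs_add_le habs); last exact/ltW/abs_Qlam_perturbation_lt.
rewrite (abs_Plam_lt1 habs) ?(le_lt_trans wr) // -(mulr_rho_expn R p_gt1).
by rewrite ler_wpM2l ?ler0n // lerXn2r ?nnegrE ?(abs_ge0 habs).
Qed.

Lemma abs_Qlam_near1 z : abs (z - 1) < 1 ->
  abs (Qlam p Qf h lam z - 1) = p%:R * abs (z - 1).
Proof.
move=> z1; have h1 : abs (h lam - 1) < 1 := lt_trans h_near1 rho_lt1_p.
have w1 : abs (shift z - 1) < 1.
  have -> : shift z - 1 = (z - 1) + (h lam - 1) by ring.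
  exact: (abs_add_lt habs).
have -> : Qlam p Qf h lam z - 1 = (Plam p lam (shift z) - Plam p lam (h lam))
    + (Qf (shift z) - Qf (h lam)) + (Qstar p Qf lam (h lam) - h lam).
  by rewrite /Qlam /Qstar; ring.
rewrite h_fixed subrr addr0.
have [->|zn1] := eqVneq z 1.
  have -> : 1 + h lam - 1 = h lam by rewrite addrAC subrr add0r.
  by rewrite !subrr addr0 abs0 ?mulr0.
have shiftB : shift z - h lam = z - 1 by rewrite addrAC addrK.
have z0 : 0 < abs (z - 1) by rewrite (abs_gt0 habs) ?subr_eq0.
rewrite addrC (abs_add_dominant habs) (abs_PlamB habs) ?shiftB //.
apply: le_lt_trans (Q_lipschitz w1 h1) _; rewrite shiftB ltr_pM2r //.
exact: lt_trans c_lt_rho (lt_trans rho_lt1_p p_gt1R).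
Qed.

Lemma abs_Qlam_large z : 1 < abs z -> abs z < rhat ->
  abs (Qlam p Qf h lam z) = p%:R * abs z ^+ p.+1.
Proof.
move=> z1 zr; have zw := abs_shift (lt_trans rho_lt1_p z1).
have PE : abs (Plam p lam (shift z)) = p%:R * abs z ^+ p.+1.
  by rewrite (abs_Plam_gt1 habs) ?zw.
rewrite abs_Qlam_dominant.
- by rewrite PE.
- by rewrite zw; apply: ltW.
- apply: le_trans (ltW rho_lt1_p) _; rewrite PE.
  by apply: mulr_ege1; [exact: ltW | apply/exprn_ege1/ltW].
Qed.

End Qlam.

Theorem lemma3p5 (R : realType) (p : nat) (K : closedFieldType)
  (abs : K -> R) (rhat : R) (a : nat -> K) (Qf : K -> K) (h : K -> K) :
  prime p ->
  is_Cp_abs p abs ->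
  (* rhat in |C_p^*| and rhat > 1 *)
  (exists w : K, w != 0 /\ abs w = rhat) -> 1 < rhat ->
  (* Q = sum a_i z^i lies in H(B): |a_i| rhat^i -> 0 *)
  (forall e : R, 0 < e -> exists N : nat, forall i, (N <= i)%N ->
      abs (a i) * rhat ^+ i < e) ->
  (* ||Q||_B = sup_i |a_i| rhat^i < rho *)
  (exists c : R, c < rho R p /\ forall i, abs (a i) * rhat ^+ i <= c) ->
  (* Qf is the function z |-> sum_i a_i z^i on B *)
  (forall z, abs z <= rhat ->
      abs_cvg abs (fun n => \sum_(i < n) a i * z ^+ i) (Qf z)) ->
  (* h(lambda) is the unique fixed point of Q^*_lambda in |z-1| <= |Q(1)|/p *)
  (forall lam, abs (lam - 1) < 1 ->
      [/\ abs (h lam - 1) <= abs (Qf 1) / p%:R,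
          Qstar p Qf lam (h lam) = h lam
        & forall y, abs (y - 1) <= abs (Qf 1) / p%:R ->
            Qstar p Qf lam y = y -> y = h lam]) ->
  forall lam z : K, abs (lam - 1) < 1 ->
  [/\ (rho R p < abs z -> abs z < 1 ->
         abs (Qlam p Qf h lam z) = p%:R * abs z ^+ p /\
         abs z < abs (Qlam p Qf h lam z)),
      (abs z <= rho R p -> abs (Qlam p Qf h lam z) <= rho R p),
      (abs (z - 1) < 1 -> abs (Qlam p Qf h lam z - 1) = p%:R * abs (z - 1))
    & (1 < abs z -> abs z < rhat ->
         abs (Qlam p Qf h lam z) = p%:R * abs z ^+ p.+1)].
Proof.
move=> p_prime Cp_abs _ rhat_gt1 _ [c [c_lt_rho a_le]] Qf_series h_spec lam z lam_near1.
have habs := Cp_abs_ultrametric Cp_abs.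
have abs_p : abs p%:R = p%:R^-1 by case: Cp_abs => _ [_ [_ [_ []]]].
have p_gt1 := prime_gt1 p_prime.
have Q_le w : abs w <= rhat -> abs (Qf w) <= c.
  by move=> wr; exact: (series_abs_le habs a_le wr (Qf_series w wr)).
have Q_lipschitz w v : abs (w - 1) < 1 -> abs (v - 1) < 1 ->
    abs (Qf w - Qf v) <= c * abs (w - v).
  move=> /(abs_near1 habs) w1 /(abs_near1 habs) v1.
  have on_B u : abs u = 1 -> abs u <= rhat by move=> ->; apply: ltW.
  have [Qw Qv] := (Qf_series w (on_B w w1), Qf_series v (on_B v v1)).
  by apply: (series_absB_le habs a_le (ltW rhat_gt1) _ _ Qw Qv); rewrite ?w1 ?v1.
have [h_le h_fixed _] := h_spec lam lam_near1.
have Q1_le : abs (Qf 1) <= c by rewrite Q_le // (abs1 habs) ltW.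
have h_near1 : abs (h lam - 1) < rho R p.
  apply: le_lt_trans h_le (le_lt_trans _ c_lt_rho).
  rewrite ler_pdivrMr ?ltr0n ?prime_gt0 //; apply/(le_trans Q1_le).
  by rewrite ler_peMr ?ler1n ?prime_gt0 // (le_trans (abs_ge0 habs _) Q1_le).
split.
- exact: (abs_Qlam_expanding habs p_gt1 abs_p lam_near1 rhat_gt1 c_lt_rho Q_le h_near1).
- exact: (abs_Qlam_disc habs p_gt1 abs_p lam_near1 rhat_gt1 c_lt_rho Q_le h_near1).
- exact: (abs_Qlam_near1 habs p_gt1 abs_p lam_near1 c_lt_rho Q_lipschitz h_near1 h_fixed).
- exact: (abs_Qlam_large habs p_gt1 abs_p lam_near1 c_lt_rho Q_le h_near1).
Qed.
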